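(* Let $\mathfrak M$ be a D2-brane with $[X^i,X^j] = \imath \Theta^{ij}$, and $\Delta \vec X^2 \equiv \langle \hspace{-0.2em} \langle \Psi |\vec X^2 |\Psi \rangle \hspace{-0.2em} \rangle - \langle \hspace{-0.2em} \langle \Psi|\vec X|\Psi \rangle \hspace{-0.2em} \rangle^2$ be the square uncertainty onto the location in the state $\Psi \in \mathbb C^2 \otimes \mathscr F$ ($\vec X^2 \equiv \delta_{ij} X^i X^j$). Then \begin{equation} \Delta \vec X^2 \geq \frac{1}{2} {\varepsilon_{ij}}^k \langle \hspace{-0.2em} \langle \sigma_k \otimes \Theta^{ij} \rangle \hspace{-0.2em} \rangle . \end{equation}
   Context: A noncommutative D2-brane $\mathfrak M = (\mathfrak X,\mathbb C^2\otimes \mathscr F, D_x)$ is a spectral triple where $\mathscr F$ is a separable Hilbert space, $\mathfrak X$ is a $*$-algebra of operators acting on $\mathscr F$, and $D_x = \sigma_i \otimes (X^i-x^i)$ is its Dirac operator, with $(\sigma_i)$ the Pauli matrices, $(X^i)_{i=1,2,3}$ self-adjoint operators of $\mathfrak X$ (coordinate observables) and $x\in\mathbb R^3$ a classical parameter. $\langle \hspace{-0.2em} \langle \cdot \rangle \hspace{-0.2em} \rangle$ denotes the expectation value in the state $\Psi \in \mathbb C^2\otimes\mathscr F$. *)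

From HB Require Import structures.
From mathcomp Require Import all_boot all_order all_algebra.
From mathcomp Require Import complex.
From mathcomp Require Import reals.
Set Implicit Arguments. Unset Strict Implicit. Unset Printing Implicit Defensive.
Import Order.TTheory GRing.Theory Num.Theory.
Local Open Scope ring_scope.

Section D2.
Variable C : numClosedFieldType.
Variable V : lmodType C.

(* A (positive-definite) Hermitian inner product on V, physics convention:
   linear in the second argument, antilinear in the first. *)
Definition inner_product (ip : V -> V -> C) : Prop :=
  [/\ (forall u v w (a : C), ip u (a *: v + w) = a * ip u v + ip u w),
      (forall u v, ip v u = (ip u v)^*),
      (forall u, 0 <= ip u u) &
      (forall u, ip u u = 0 -> u = 0)].

Definition symmetric_op (ip : V -> V -> C) (A : V -> V) : Prop :=
  forall u v, ip u (A v) = ip (A u) v.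

(* Elements of C^2 (x) V, represented as functions 'I_2 -> V. *)
Definition tensor_ip (ip : V -> V -> C) (Psi Phi : 'I_2 -> V) : C :=
  \sum_(a < 2) ip (Psi a) (Phi a).

Definition tens (s : 'M[C]_2) (A : V -> V) (Psi : 'I_2 -> V) : 'I_2 -> V :=
  fun a => \sum_(b < 2) s a b *: A (Psi b).

Definition expect (ip : V -> V -> C) (Psi : 'I_2 -> V)
  (O : ('I_2 -> V) -> ('I_2 -> V)) : C :=
  tensor_ip ip Psi (O Psi).

End D2.

(* Pauli matrices sigma_1, sigma_2, sigma_3 (indexed by 'I_3 = {0,1,2}). *)
Definition pauli {C : numClosedFieldType} (k : 'I_3) : 'M[C]_2 :=
  \matrix_(a < 2, b < 2)
    match nat_of_ord k, nat_of_ord a, nat_of_ord b with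
    | 0, 0, 1 => 1 | 0, 1, 0 => 1
    | 1, 0, 1 => - 'i | 1, 1, 0 => 'i
    | 2, 0, 0 => 1 | 2, 1, 1 => -1
    | _, _, _ => 0
    end.

(* Levi-Civita symbol eps_{ijk} with eps_{123} = 1 (indices 0,1,2). *)
Definition levi_civita {C : numClosedFieldType} (i j k : 'I_3) : C :=
  match nat_of_ord i, nat_of_ord j, nat_of_ord k with
  | 0, 1, 2 | 1, 2, 0 | 2, 0, 1 => 1
  | 0, 2, 1 | 2, 1, 0 | 1, 0, 2 => -1
  | _, _, _ => 0
  end.

From HB Require Import structures.
From mathcomp Require Import all_boot all_order all_algebra.
From mathcomp Require Import complex.
From mathcomp Require Import reals.
Set Implicit Arguments. Unset Strict Implicit. Unset Printing Implicit Defensive.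
Import Order.TTheory GRing.Theory Num.Theory.
Local Open Scope ring_scope.

(* Let x = <<X>> and A_k = X^k - x^k.  The Pauli relations
   sigma_i sigma_j = delta_ij + i eps_ij^k sigma_k give, for D = sigma_k (x) A_k,
   D^2 = sum_k A_k^2 + (i/2) eps_ij^k sigma_k (x) [A_i, A_j]
       = sum_k A_k^2 - (1/2) eps_ij^k sigma_k (x) Theta^ij,
   since centering does not change the commutators.  As D is symmetric,
   <<D^2>> = ||D Psi||^2 >= 0, and <<sum_k A_k^2>> = Delta X^2 for normalized Psi. *)

Section Sesquilinear.
Variables (C : numClosedFieldType) (V : lmodType C) (ip : V -> V -> C).
Hypothesis ip_ax : inner_product ip.

Lemma ipC u v : ip u v = (ip v u)^*.
Proof. by case: ip_ax => _ conj_sym _ _; apply: conj_sym. Qed.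

Lemma ipDr u v w : ip u (v + w) = ip u v + ip u w.
Proof. by case: ip_ax => lin _ _ _; have := lin u v w 1; rewrite scale1r mul1r. Qed.

Lemma ip0r u : ip u 0 = 0.
Proof. by apply: (addIr (ip u 0)); rewrite add0r -ipDr addr0. Qed.

Lemma ipZr u a v : ip u (a *: v) = a * ip u v.
Proof. by case: ip_ax => lin _ _ _; have := lin u v 0 a; rewrite !addr0 ip0r addr0. Qed.

Lemma ipBr u v w : ip u (v - w) = ip u v - ip u w.
Proof. by rewrite ipDr -scaleN1r ipZr mulN1r. Qed.

Lemma ip_sumr u I (r : seq I) (P : pred I) (F : I -> V) :
  ip u (\sum_(i <- r | P i) F i) = \sum_(i <- r | P i) ip u (F i).
Proof. exact: (big_morph _ (ipDr u) (ip0r u)). Qed.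

Lemma ipZl u a v : ip (a *: u) v = a^* * ip u v.
Proof. by rewrite ipC ipZr rmorphM /= -ipC. Qed.

Lemma ipBl u v w : ip (u - v) w = ip u w - ip v w.
Proof. by rewrite ipC ipBr rmorphB /= -!ipC. Qed.

Lemma ip_suml v I (r : seq I) (P : pred I) (F : I -> V) :
  ip (\sum_(i <- r | P i) F i) v = \sum_(i <- r | P i) ip (F i) v.
Proof. by rewrite ipC ip_sumr rmorph_sum /=; apply: eq_bigr => i _; rewrite -ipC. Qed.

Lemma tensor_ip_ge0 Phi : 0 <= tensor_ip ip Phi Phi.
Proof. by case: ip_ax => _ _ pos _; apply: sumr_ge0 => a _; apply: pos. Qed.

End Sesquilinear.

Section Pauli.
Variable C : numClosedFieldType.

Lemma pauli_conj (k : 'I_3) (a b : 'I_2) : (pauli k a b)^* = pauli (C:=C) k b a.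
Proof.
rewrite !mxE; case: k a b => [[|[|[|//]]] ?] [[|[|//]] ?] [[|[|//]] ?] /=;
  by rewrite ?(conjC0, conjC1, conjCN1, conjCi, raddfN) //= conjCi opprK.
Qed.

Lemma levi_civita_swap (i j k : 'I_3) : levi_civita j i k = - levi_civita (C:=C) i j k.
Proof.
by case: i j k => [[|[|[|//]]] ?] [[|[|[|//]]] ?] [[|[|[|//]]] ?]; rewrite /= ?oppr0 ?opprK.
Qed.

Lemma pauli_mul (k l : 'I_3) :
  pauli k *m pauli l
  = (k == l)%:R *: 1%:M + 'i *: \sum_m levi_civita k l m *: pauli (C:=C) m.
Proof.
apply/matrixP => a b; rewrite !mxE !big_ord_recl !big_ord0 !mxE.
case: k l a b => [[|[|[|//]]] ?] [[|[|[|//]]] ?] [[|[|//]] ?] [[|[|//]] ?];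
  by rewrite /levi_civita /=
       ?(mul0r, mulr0, mul1r, mulr1, add0r, addr0, mulrN, mulNr, mulCii, opprK).
Qed.
End Pauli.

Section Expectation.
Variables (C : numClosedFieldType) (V : lmodType C) (ip : V -> V -> C).
Hypothesis ip_ax : inner_product ip.
Variable Psi : 'I_2 -> V.

Lemma expectE s A :
  expect ip Psi (tens s A) = \sum_a \sum_b s a b * ip (Psi a) (A (Psi b)).
Proof.
rewrite /expect /tensor_ip /tens; apply: eq_bigr => a _.
by rewrite (ip_sumr ip_ax); apply: eq_bigr => b _; rewrite (ipZr ip_ax).
Qed.

Lemma expect_tens1 A : expect ip Psi (tens 1%:M A) = \sum_a ip (Psi a) (A (Psi a)).
Proof.
rewrite expectE; apply: eq_bigr => a _.
rewrite (bigD1 a) //= mxE eqxx mul1r big1 ?addr0 // => b neq_ba.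
by rewrite mxE eq_sym (negbTE neq_ba) mul0r.
Qed.

Lemma eq_expect_tens s A B :
  A =1 B -> expect ip Psi (tens s A) = expect ip Psi (tens s B).
Proof. by move=> eqAB; rewrite !expectE; under eq_bigr do under eq_bigr do rewrite eqAB. Qed.

Lemma expect_tensDl s t A :
  expect ip Psi (tens (s + t) A) = expect ip Psi (tens s A) + expect ip Psi (tens t A).
Proof.
rewrite !expectE -big_split; apply: eq_bigr => a _.
by rewrite -big_split; apply: eq_bigr => b _; rewrite mxE mulrDl.
Qed.

Lemma expect_tensZl c s A :
  expect ip Psi (tens (c *: s) A) = c * expect ip Psi (tens s A).
Proof.
rewrite !expectE mulr_sumr; apply: eq_bigr => a _.
by rewrite mulr_sumr; apply: eq_bigr => b _; rewrite mxE mulrA.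
Qed.

Lemma expect_tens_suml I (r : seq I) (P : pred I) (s : I -> 'M_2) A :
  expect ip Psi (tens (\sum_(i <- r | P i) s i) A)
  = \sum_(i <- r | P i) expect ip Psi (tens (s i) A).
Proof.
apply: (big_morph (fun s => expect ip Psi (tens s A))) => [s1 s2|].
  exact: expect_tensDl.
by rewrite -(scale0r (0 : 'M_2)) expect_tensZl mul0r.
Qed.

Lemma expect_tensBr s A B :
  expect ip Psi (tens s (fun v => A v - B v))
  = expect ip Psi (tens s A) - expect ip Psi (tens s B).
Proof.
rewrite !expectE -sumrB; apply: eq_bigr => a _.
by rewrite -sumrB; apply: eq_bigr => b _; rewrite (ipBr ip_ax) mulrBr.
Qed.

Lemma expect_tensDr s A B :
  expect ip Psi (tens s (fun v => A v + B v))
  = expect ip Psi (tens s A) + expect ip Psi (tens s B).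
Proof.
rewrite !expectE -big_split; apply: eq_bigr => a _.
by rewrite -big_split; apply: eq_bigr => b _; rewrite (ipDr ip_ax) mulrDr.
Qed.

Lemma expect_tensZr s c A :
  expect ip Psi (tens s (fun v => c *: A v)) = c * expect ip Psi (tens s A).
Proof.
rewrite !expectE mulr_sumr; apply: eq_bigr => a _.
by rewrite mulr_sumr; apply: eq_bigr => b _; rewrite (ipZr ip_ax) mulrCA.
Qed.

Lemma expect_tens_sumr s I (r : seq I) (P : pred I) (A : I -> V -> V) :
  expect ip Psi (tens s (fun v => \sum_(i <- r | P i) A i v))
  = \sum_(i <- r | P i) expect ip Psi (tens s (A i)).
Proof.
rewrite expectE; under eq_bigr do under eq_bigr do rewrite (ip_sumr ip_ax) mulr_sumr.
under eq_bigr do rewrite exchange_big; rewrite exchange_big.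
by apply: eq_bigr => i _; rewrite expectE.
Qed.

Lemma conj_expect_tens1 A :
  symmetric_op ip A -> (expect ip Psi (tens 1%:M A))^* = expect ip Psi (tens 1%:M A).
Proof.
move=> symA; rewrite !expect_tens1 rmorph_sum /=.
by apply: eq_bigr => a _; rewrite -(ipC ip_ax) symA.
Qed.

Lemma tensor_ip_sum I J (r : seq I) (r' : seq J) (F : I -> 'I_2 -> V) (G : J -> 'I_2 -> V) :
  tensor_ip ip (fun a => \sum_(i <- r) F i a) (fun a => \sum_(j <- r') G j a)
  = \sum_(i <- r) \sum_(j <- r') tensor_ip ip (F i) (G j).
Proof.
rewrite /tensor_ip; under eq_bigr do rewrite (ip_suml ip_ax).
under eq_bigr do under eq_bigr do rewrite (ip_sumr ip_ax).
rewrite exchange_big; apply: eq_bigr => i _; exact: exchange_big.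
Qed.

Lemma tensor_ip_tens (s t : 'M[C]_2) (A B : V -> V) :
  (forall a b, (s a b)^* = s b a) -> symmetric_op ip A ->
  tensor_ip ip (tens s A Psi) (tens t B Psi)
  = expect ip Psi (tens (s *m t) (fun v => A (B v))).
Proof.
move=> herm_s symA; rewrite expectE /tensor_ip /tens.
under eq_bigr do rewrite (ip_suml ip_ax).
under eq_bigr do under eq_bigr do rewrite (ipZl ip_ax) (ip_sumr ip_ax) mulr_sumr.
rewrite exchange_big; apply: eq_bigr => b _; rewrite exchange_big.
apply: eq_bigr => c _; rewrite mxE mulr_suml; apply: eq_bigr => a _.
by rewrite (ipZr ip_ax) symA herm_s mulrA.
Qed.

End Expectation.

Lemma sum_levi_civita_antisym (C : numClosedFieldType) (F : 'I_3 -> 'I_3 -> 'I_3 -> C) :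
  \sum_i \sum_j \sum_k levi_civita i j k * F i j k
  = 2^-1 * \sum_i \sum_j \sum_k levi_civita i j k * (F i j k - F j i k).
Proof.
set S := (X in X = _).
have swapS : \sum_i \sum_j \sum_k levi_civita i j k * F j i k = - S.
  rewrite exchange_big -sumrN; apply: eq_bigr => i _; rewrite -sumrN.
  apply: eq_bigr => j _; rewrite -sumrN; apply: eq_bigr => k _.
  by rewrite levi_civita_swap mulNr.
have -> : \sum_i \sum_j \sum_k levi_civita i j k * (F i j k - F j i k) = S - - S.
  rewrite -swapS -sumrB; apply: eq_bigr => i _; rewrite -sumrB.
  by apply: eq_bigr => j _; rewrite -sumrB; apply: eq_bigr => k _; rewrite mulrBr.
by rewrite opprK -mulr2n -[S *+ 2]mulr_natl mulrA mulVf ?mul1r ?pnatr_eq0.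
Qed.

Section Dirac.
Variables (C : numClosedFieldType) (V : lmodType C) (ip : V -> V -> C).
Hypothesis ip_ax : inner_product ip.

Definition dirac (A : 'I_3 -> V -> V) (Psi : 'I_2 -> V) : 'I_2 -> V :=
  fun a => \sum_k tens (pauli k) (A k) Psi a.

Variables (A : 'I_3 -> V -> V) (Psi : 'I_2 -> V).
Hypothesis symA : forall k, symmetric_op ip (A k).

Lemma tensor_ip_dirac :
  tensor_ip ip (dirac A Psi) (dirac A Psi)
  = \sum_k \sum_l expect ip Psi (tens (pauli k *m pauli l) (fun v => A k (A l v))).
Proof.
rewrite /dirac (tensor_ip_sum ip_ax); apply: eq_bigr => k _; apply: eq_bigr => l _.
exact/(tensor_ip_tens ip_ax)/symA/pauli_conj.
Qed.

Lemma tensor_ip_dirac_commutator (Theta : 'I_3 -> 'I_3 -> V -> V) :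
  (forall i j v, A i (A j v) - A j (A i v) = 'i *: Theta i j v) ->
  tensor_ip ip (dirac A Psi) (dirac A Psi)
  = \sum_k expect ip Psi (tens 1%:M (fun v => A k (A k v)))
    - 2^-1 * \sum_i \sum_j \sum_k
               levi_civita i j k * expect ip Psi (tens (pauli k) (Theta i j)).
Proof.
move=> commA; rewrite tensor_ip_dirac.
under eq_bigr do under eq_bigr do
  rewrite pauli_mul (expect_tensDl ip_ax) !(expect_tensZl ip_ax) (expect_tens_suml ip_ax).
under eq_bigr do rewrite big_split /=; rewrite big_split /=; congr (_ + _).
  apply: eq_bigr => k _; rewrite (bigD1 k) //= eqxx mul1r big1 ?addr0 // => l.
  by rewrite eq_sym => /negbTE ->; rewrite mul0r.
under eq_bigr do under eq_bigr do under eq_bigr do rewrite (expect_tensZl ip_ax).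
have commutators : \sum_k \sum_l \sum_m levi_civita k l m *
      (expect ip Psi (tens (pauli m) (fun v => A k (A l v)))
       - expect ip Psi (tens (pauli m) (fun v => A l (A k v))))
    = 'i * \sum_k \sum_l \sum_m levi_civita k l m * expect ip Psi (tens (pauli m) (Theta k l)).
  rewrite mulr_sumr; apply: eq_bigr => k _; rewrite mulr_sumr; apply: eq_bigr => l _.
  rewrite mulr_sumr; apply: eq_bigr => m _.
  rewrite -(expect_tensBr ip_ax) (eq_expect_tens ip_ax _ _ (commA k l)).
  by rewrite (expect_tensZr ip_ax) mulrCA.
under eq_bigr do rewrite -mulr_sumr.
rewrite -mulr_sumr sum_levi_civita_antisym commutators.
by rewrite (mulrCA 'i) (mulrA 'i) mulCii mulN1r mulrN.
Qed.

End Dirac.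

Section Centered.
Variables (C : numClosedFieldType) (V : lmodType C).

Definition centered (A : V -> V) (c : C) (v : V) : V := A v - c *: v.

Lemma centered_comp (A : {linear V -> V}) (B : V -> V) a b v :
  centered A a (centered B b v) = A (B v) - (a *: B v + b *: A v - (a * b) *: v).
Proof.
rewrite /centered linearB linearZ /= -addrA -opprD scalerBr scalerA addrA.
by rewrite [b *: _ + _]addrC.
Qed.

Lemma centered_commutator (A B : {linear V -> V}) a b v :
  centered A a (centered B b v) - centered B b (centered A a v) = A (B v) - B (A v).
Proof. by rewrite !centered_comp [b * a]mulrC [b *: _ + _]addrC (opprB (B (A v))) subrKA. Qed.

Variables (ip : V -> V -> C) (Psi : 'I_2 -> V).
Hypothesis ip_ax : inner_product ip.

Lemma symmetric_centered A c :
  symmetric_op ip A -> c^* = c -> symmetric_op ip (centered A c).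
Proof.
move=> symA real_c u v.
by rewrite /centered (ipBr ip_ax) (ipBl ip_ax) (ipZr ip_ax) (ipZl ip_ax) real_c symA.
Qed.

Lemma expect_centered_sqr (A : {linear V -> V}) :
  tensor_ip ip Psi Psi = 1 ->
  let c := expect ip Psi (tens 1%:M A) in
  expect ip Psi (tens 1%:M (fun v => centered A c (centered A c v)))
  = expect ip Psi (tens 1%:M (fun v => A (A v))) - c ^+ 2.
Proof.
move=> Psi_normed c; rewrite (eq_expect_tens ip_ax _ _ (centered_comp A A c c)).
rewrite !(expect_tensBr ip_ax) (expect_tensDr ip_ax) !(expect_tensZr ip_ax) -/c.
have -> : expect ip Psi (tens 1%:M (fun v => v)) = 1 by rewrite (expect_tens1 ip_ax).
by rewrite mulr1 addrK expr2.
Qed.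

End Centered.

Local Open Scope complex_scope.
Theorem mainTheorem1 (R : realType) (V : lmodType R[i])
  (ip : V -> V -> R[i]) (X : 'I_3 -> {linear V -> V})
  (Theta : 'I_3 -> 'I_3 -> {linear V -> V}) (Psi : 'I_2 -> V) :
  inner_product ip ->
  (forall i, symmetric_op ip (X i)) ->
  (forall i j v, X i (X j v) - X j (X i v) = 'i *: Theta i j v) ->
  tensor_ip ip Psi Psi = 1 ->
  let DeltaX2 :=
    expect ip Psi (tens 1%:M (fun v => \sum_(i < 3) X i (X i v)))
    - \sum_(i < 3) (expect ip Psi (tens 1%:M (X i))) ^+ 2 in
  DeltaX2 >= 2^-1 * \sum_(i < 3) \sum_(j < 3) \sum_(k < 3)
               (levi_civita i j k : R[i]) * expect ip Psi (tens (pauli k) (Theta i j)).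
Proof.
move=> ip_ax symX commX Psi_normed; cbv zeta; set DeltaX2 := (X in _ <= X).
pose x k := expect ip Psi (tens 1%:M (X k)).
pose A k := centered (X k) (x k).
have symA k : symmetric_op ip (A k) :=
  symmetric_centered ip_ax (symX k) (conj_expect_tens1 ip_ax Psi (symX k)).
have commA i j v : A i (A j v) - A j (A i v) = 'i%R *: Theta i j v.
  by rewrite centered_commutator commX.
have -> : DeltaX2 = \sum_k expect ip Psi (tens 1%:M (fun v => A k (A k v))).
  rewrite /DeltaX2 (expect_tens_sumr ip_ax) -sumrB; apply: eq_bigr => k _.
  by rewrite (expect_centered_sqr ip_ax).
rewrite -subr_ge0 -(tensor_ip_dirac_commutator ip_ax Psi symA commA).
exact: tensor_ip_ge0.
Qed.
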